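(* For every finite simple graph $G$ on $n$ vertices with at least one edge, $$\min_{\lambda_n^{-1}\le x\le 0}W(x)\le n\Big(1-\frac{\delta}{\mu_1}\Big),$$ where $W(x)$ is the (unweighted) walk-generating function of $G$, $\delta$ the minimum degree, $\mu_1$ the largest eigenvalue of the Laplacian $L=D-A$, and $\lambda_n$ the smallest eigenvalue of the adjacency matrix $A$.
   Context: $A$ is the 0/1 adjacency matrix, $D$ the diagonal degree matrix, $\boldsymbol 1$ the all-ones vector. $W(x)=\langle\boldsymbol 1,(I-xA)^{-1}\boldsymbol 1\rangle=\sum_{\lambda\in\sigma(A)}\frac{\langle\boldsymbol 1,P_\lambda\boldsymbol 1\rangle}{1-\lambda x}$, where $P_\lambda$ is the orthogonal projection onto the $\lambda$-eigenspace of $A$, terms with $\langle\boldsymbol 1,P_\lambda\boldsymbol 1\rangle=0$ are omitted, and the value at a pole is $+\infty$. *)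

From HB Require Import structures.
From mathcomp Require Import all_boot all_order all_algebra.
From mathcomp Require Import polyrcf.
Set Implicit Arguments. Unset Strict Implicit. Unset Printing Implicit Defensive.
Import Order.TTheory GRing.Theory Num.Theory.
Local Open Scope ring_scope.

Definition simple_graph (n : nat) (e : rel 'I_n) : Prop :=
  symmetric e /\ irreflexive e.

Definition has_edge (n : nat) (e : rel 'I_n) : Prop := exists i j, e i j.

Definition adjm (R : nzRingType) (n : nat) (e : rel 'I_n) : 'M[R]_n :=
  \matrix_(i, j) (e i j)%:R.

Definition deg (n : nat) (e : rel 'I_n) (i : 'I_n) : nat := #|[set j | e i j]|.

Definition degm (R : nzRingType) (n : nat) (e : rel 'I_n) : 'M[R]_n :=
  \matrix_(i, j) ((i == j)%:R * (deg e i)%:R).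

Definition laplm (R : nzRingType) (n : nat) (e : rel 'I_n) : 'M[R]_n :=
  degm R e - adjm R e.

(* minimum degree (n is an upper bound for every degree, used as neutral) *)
Definition mindeg (n : nat) (e : rel 'I_n) : nat :=
  \big[minn/n]_(i < n) deg e i.

(* the list of distinct (real) eigenvalues of a matrix, i.e. real roots of
   its characteristic polynomial *)
Definition spec (R : rcfType) (n : nat) (M : 'M[R]_n) : seq R :=
  rootsR (char_poly M).

Definition eig_min (R : rcfType) (n : nat) (M : 'M[R]_n) : R :=
  let s := spec M in \big[Num.min/head 0 s]_(r <- s) r.

Definition eig_max (R : rcfType) (n : nat) (M : 'M[R]_n) : R :=
  let s := spec M in \big[Num.max/head 0 s]_(r <- s) r.

(* orthogonal projection (on column vectors) onto the row space of a
   matrix B with linearly independent rows: P = B^T (B B^T)^{-1} B *)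
Definition orth_proj (R : fieldType) (m n : nat) (B : 'M[R]_(m, n)) : 'M[R]_n :=
  B^T *m invmx (B *m B^T) *m B.

Definition eigproj (R : fieldType) (n : nat) (M : 'M[R]_n) (l : R) : 'M[R]_n :=
  orth_proj (row_base (eigenspace M l)).

Definition ones (R : nzRingType) (n : nat) : 'cV[R]_n := const_mx 1.

Definition eigweight (R : fieldType) (n : nat) (M : 'M[R]_n) (l : R) : R :=
  ((ones R n)^T *m eigproj M l *m ones R n) 0 0.

(* W(x) = sum over lambda in spec(A) with nonzero weight of
   <1,P_lambda 1>/(1 - lambda x); None encodes the value +oo at a pole. *)
Definition walkgen (R : rcfType) (n : nat) (M : 'M[R]_n) (x : R) : option R :=
  let s := [seq l <- spec M | eigweight M l != 0] in
  if has (fun l => 1 - l * x == 0) s then None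
  else Some (\sum_(l <- s) eigweight M l / (1 - l * x)).

From HB Require Import structures.
From mathcomp Require Import all_boot all_order all_algebra.
From mathcomp Require Import polyrcf.
From mathcomp Require Import spectral complex.
From mathcomp Require Import ring lra.
Set Implicit Arguments. Unset Strict Implicit. Unset Printing Implicit Defensive.
Import Order.TTheory GRing.Theory Num.Theory.
Local Open Scope ring_scope.

(* Put t = mu_1 - delta and x = -1/t.  Since v^T L v = v^T D v - v^T A v and
   v^T D v >= delta |v|^2, the Rayleigh bound v^T L v <= mu_1 |v|^2 gives
   v^T A v >= -t |v|^2.  Hence lambda_n >= -t, i.e. 1/lambda_n <= x; moreover
   every eigenvector of A for the eigenvalue -t attains the Rayleigh bound of
   L, so it is a mu_1-eigenvector of L and is orthogonal to 1 (as L 1 = 0):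
   W has no pole at x.  Finally W(x) = <u, 1> where u (I - x A) = 1, i.e.
   u A = t (1 - u), and the Rayleigh bound for L at u - (t / mu_1) 1 reduces
   to t W(x) <= t^2 n / mu_1. *)

Definition sqnorm (R : nzRingType) m (v : 'rV[R]_m) : R := (v *m v^T) 0 0.

Definition qform (R : nzRingType) n (M : 'M[R]_n) (v : 'rV[R]_n) : R :=
  (v *m M *m v^T) 0 0.

Section QuadraticForms.
Variable R : realFieldType.

Lemma sqnorm_ge0 m (v : 'rV[R]_m) : 0 <= sqnorm v.
Proof.
by rewrite /sqnorm mxE; apply: sumr_ge0 => j _; rewrite mxE -expr2 sqr_ge0.
Qed.

Lemma sqnorm_eq0 m (v : 'rV[R]_m) : (sqnorm v == 0) = (v == 0).
Proof.
apply/idP/eqP => [|->]; last by rewrite /sqnorm mul0mx mxE.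
rewrite /sqnorm mxE psumr_eq0 => [/allP v0|j _]; last first.
  by rewrite mxE -expr2 sqr_ge0.
apply/rowP => j; have := v0 j (mem_index_enum j).
by rewrite mxE -expr2 sqrf_eq0 mxE => /eqP.
Qed.

Lemma sqnorm_gt0 m (v : 'rV[R]_m) : v != 0 -> 0 < sqnorm v.
Proof. by move=> v0; rewrite lt_def sqnorm_eq0 v0 sqnorm_ge0. Qed.

Lemma qform1 n (v : 'rV[R]_n) : qform 1%:M v = sqnorm v.
Proof. by rewrite /qform mulmx1. Qed.

Lemma qformD n (M N : 'M[R]_n) v : qform (M + N) v = qform M v + qform N v.
Proof. by rewrite /qform mulmxDr mulmxDl mxE. Qed.

Lemma qformB n (M N : 'M[R]_n) v : qform (M - N) v = qform M v - qform N v.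
Proof. by rewrite qformD; congr (_ + _); rewrite /qform mulmxN mulNmx mxE. Qed.

Lemma qformZ n a (M : 'M[R]_n) v : qform (a *: M) v = a * qform M v.
Proof. by rewrite /qform -scalemxAr -scalemxAl mxE. Qed.

Lemma qform_sum n (s : seq R) (F : R -> 'M[R]_n) v :
  qform (\sum_(l <- s) F l) v = \sum_(l <- s) qform (F l) v.
Proof. by rewrite /qform mulmx_sumr mulmx_suml summxE. Qed.

Lemma qform_eigenvector n (M : 'M[R]_n) l v :
  v *m M = l *: v -> qform M v = l * sqnorm v.
Proof. by move=> vM; rewrite /qform vM -scalemxAl mxE. Qed.

Lemma qform_delta_sub n (M : 'M[R]_n) i j :
  qform M (delta_mx 0 i - delta_mx 0 j) = M i i - M i j - M j i + M j j.
Proof.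
have qdelta a b :
    (delta_mx (0 : 'I_1) a *m M *m (delta_mx (0 : 'I_1) b)^T) 0 0 = M a b.
  by rewrite trmx_delta -rowE -colE !mxE.
rewrite /qform linearB /= !mulmxBr !mulmxBl !mxE -!qdelta !mxE; ring.
Qed.

Lemma sqnorm_subZ m (u v : 'rV[R]_m) a :
  sqnorm (u - a *: v) =
  sqnorm u - 2 * a * (u *m v^T) 0 0 + a ^+ 2 * sqnorm v.
Proof.
have vu : \sum_j v 0 j * u^T j 0 = \sum_j u 0 j * v^T j 0.
  by apply: eq_bigr => j _; rewrite !mxE mulrC.
have trB : (u - a *: v)^T = u^T - a *: v^T by rewrite linearB linearZ.
rewrite /sqnorm trB mulmxBl !mulmxBr -!scalemxAl -!scalemxAr.
rewrite !mxE vu; ring.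
Qed.

Lemma qform_addZ_ker n (M : 'M[R]_n) u v a :
  v *m M = 0 -> M *m v^T = 0 -> qform M (u + a *: v) = qform M u.
Proof.
move=> vM Mv; rewrite /qform mulmxDl -scalemxAl vM scaler0 addr0.
rewrite linearD linearZ /= mulmxDr -scalemxAr -[u *m M *m v^T]mulmxA Mv.
by rewrite mulmx0 scaler0 addr0.
Qed.

End QuadraticForms.

Section OrthogonalProjection.
Variables (R : realFieldType) (p n : nat) (B : 'M[R]_(p, n)).
Hypothesis freeB : row_free B.

Lemma row_free_mul_tr_unit : B *m B^T \in unitmx.
Proof.
rewrite -row_free_unit; apply: inj_row_free => c cBBt0.
have : sqnorm (c *m B) = 0.
  by rewrite /sqnorm trmx_mul !mulmxA -(mulmxA c) cBBt0 !mul0mx mxE.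
by move/eqP; rewrite sqnorm_eq0 mulmx_free_eq0 // => /eqP.
Qed.

Lemma orth_projT : (orth_proj B)^T = orth_proj B.
Proof. by rewrite /orth_proj !trmx_mul trmxK trmx_inv trmx_mul trmxK mulmxA. Qed.

Lemma orth_proj_id m (v : 'M[R]_(m, n)) : (v <= B)%MS -> v *m orth_proj B = v.
Proof.
move=> /submxP [c ->]; rewrite /orth_proj !mulmxA -(mulmxA c) -(mulmxA c).
by rewrite mulmxV ?row_free_mul_tr_unit // mulmx1.
Qed.

Lemma orth_projK : orth_proj B *m orth_proj B = orth_proj B.
Proof. by apply: orth_proj_id; rewrite submxMl. Qed.

Lemma qform_orth_proj (v : 'rV[R]_n) :
  qform (orth_proj B) v = sqnorm (v *m orth_proj B).
Proof.
by rewrite /qform /sqnorm trmx_mul orth_projT -{1}orth_projK !mulmxA.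
Qed.

End OrthogonalProjection.

Section EigenProjection.
Variables (R : realFieldType) (n : nat) (S : 'M[R]_n).

Lemma eigenbase_sub l : (row_base (eigenspace S l) <= eigenspace S l)%MS.
Proof. by rewrite eq_row_base. Qed.

Lemma eigprojT l : (eigproj S l)^T = eigproj S l.
Proof. exact: orth_projT. Qed.

Lemma eigproj_mulmx l : eigproj S l *m S = l *: eigproj S l.
Proof.
have /eigenspaceP BS := eigenbase_sub l.
by rewrite /eigproj /orth_proj -mulmxA BS -scalemxAr.
Qed.

Lemma eigproj_id l m (v : 'M[R]_(m, n)) :
  (v <= eigenspace S l)%MS -> v *m eigproj S l = v.
Proof.
by move=> vS; apply: orth_proj_id; rewrite ?row_base_free ?eq_row_base.
Qed.

Lemma qform_eigproj_ge0 l v : 0 <= qform (eigproj S l) v.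
Proof. by rewrite qform_orth_proj ?sqnorm_ge0 ?row_base_free. Qed.

Lemma eigproj_mul_eq0 l p (X : 'M[R]_(n, p)) :
  eigenspace S l *m X = 0 -> eigproj S l *m X = 0.
Proof.
move=> SX0; have /submxP [c cE] := eigenbase_sub l.
have BX0 : row_base (eigenspace S l) *m X = 0 by rewrite cE -mulmxA SX0 mulmx0.
by rewrite /eigproj /orth_proj -mulmxA BX0 mulmx0.
Qed.

Hypothesis symS : S^T = S.

Lemma eigproj_ortho l l' m (v : 'M[R]_(m, n)) :
  (v <= eigenspace S l')%MS -> l' != l -> v *m eigproj S l = 0.
Proof.
move=> /eigenspaceP vS l'l; rewrite /eigproj /orth_proj.
have /eigenspaceP := eigenbase_sub l; set B := row_base _ => BS.
suff vB0 : v *m B^T = 0 by rewrite !mulmxA vB0 !mul0mx.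
have : (v *m S) *m B^T = v *m (B *m S)^T.
  by rewrite [(B *m S)^T]trmx_mul symS mulmxA.
rewrite vS BS -scalemxAl linearZ /= -scalemxAr => /eqP.
by rewrite -subr_eq0 -scalerBl scaler_eq0 subr_eq0 (negbTE l'l) => /eqP.
Qed.

End EigenProjection.

Section SpectralDecomposition.
Variables (R : rcfType) (n : nat) (S : 'M[R]_n).

Lemma mem_spec l : (l \in spec S) = eigenvalue S l.
Proof.
have chS0 : char_poly S != 0 by rewrite monic_neq0 // char_poly_monic.
by rewrite eigenvalue_root_char /spec -(roots_on_rootsR chS0).
Qed.

Lemma spec_uniq : uniq (spec S).
Proof. exact/lt_sorted_uniq/sorted_roots. Qed.

Lemma eig_max_ge l : l \in spec S -> l <= eig_max S.
Proof. by move=> lS; rewrite /eig_max; apply: le_bigmax_seq. Qed.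

Lemma eig_min_le l : l \in spec S -> eig_min S <= l.
Proof. by move=> lS; rewrite /eig_min; apply: ge_bigmin_seq. Qed.

Lemma eig_min_mem : spec S != [::] -> eig_min S \in spec S.
Proof.
rewrite /eig_min; case: (spec S) => // a s _ /=; rewrite big_seq.
by elim/big_ind: _ => // [|x y xs ys]; [exact: mem_head | case: leP].
Qed.

Hypothesis symS : S^T = S.

(* Over R[i], S is Hermitian: the rows of its unitary spectral basis are
   eigenvectors for real eigenvalues r, so they lie in the complexified
   r-eigenspaces of S. *)
Lemma eigenspaces_full : (1%:M <= \sum_(l <- spec S) eigenspace S l)%MS.
Proof.
set E := (\sum_(l <- spec S) eigenspace S l)%MS.
pose f := real_complex R; pose SC := map_mx f S.
have SCherm : SC \is hermsymmx.
  apply: realsym_hermsym.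
    apply/is_hermitianmxP.
    by rewrite expr0 scale1r map_mx_id // /SC map_trmx symS.
  by apply/mxOverP => i j; rewrite mxE; apply/complex_realP; eexists.
have /orthomx_spectralP SCE := hermitian_normalmx SCherm.
have dreal := hermitian_spectral_diag_real SCherm.
set P := spectralmx SC in SCE; set d := spectral_diag SC in SCE dreal.
have PSC : P *m SC = diag_mx d *m P.
  by rewrite {1}SCE !mulmxA mulmxV ?spectral_unit // mul1mx.
suff PS : (P <= map_mx f E)%MS.
  rewrite -(map_submx f) map_mx1; apply: submx_trans PS.
  by rewrite sub1mx row_full_unit spectral_unit.
apply/row_subP => i; pose r := complex.Re (d 0 i).
have dr : d 0 i = f r by rewrite /f RRe_real // (mxOverP dreal).
have rowPE : (row i P <= map_mx f (eigenspace S r))%MS.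
  rewrite map_eigenspace; apply/eigenspaceP.
  rewrite -/SC -row_mul PSC mul_diag_mx.
  by apply/rowP => j; rewrite !mxE dr.
have rS : r \in spec S.
  rewrite mem_spec /eigenvalue; apply: contraTneq rowPE => ->.
  rewrite map_mx0 submx0 rowE mulmx_free_eq0 ?row_free_unit ?spectral_unit //.
  by apply/eqP => /matrixP /(_ 0 i); rewrite !mxE !eqxx => /eqP; rewrite oner_eq0.
apply: submx_trans rowPE _; rewrite map_submx /E (bigD1_seq r) ?spec_uniq //=.
exact: addsmxSl.
Qed.

Lemma sum_eigproj : \sum_(l <- spec S) eigproj S l = 1%:M.
Proof.
set T := \sum_(l <- spec S) eigproj S l.
have Tid l m (v : 'M_(m, n)) :
    l \in spec S -> (v <= eigenspace S l)%MS -> v *m T = v.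
  move=> lS vS; rewrite mulmx_sumr (bigD1_seq l) ?spec_uniq //= eigproj_id //.
  by rewrite big1 ?addr0 // => l' l'l; rewrite (eigproj_ortho symS vS) // eq_sym.
have Tsum s (v : 'rV_n) : {subset s <= spec S} ->
    (v <= \sum_(l <- s) eigenspace S l)%MS -> v *m T = v.
  elim: s v => [|a s IHs] v sS.
    by rewrite big_nil submx0 => /eqP ->; rewrite mul0mx.
  rewrite big_cons => /sub_addsmxP [[u1 u2] /= ->].
  rewrite mulmxDl (Tid a) ?submxMl ?sS ?mem_head // IHs ?submxMl //.
  by move=> x xs; rewrite sS // inE xs orbT.
apply/row_matrixP => i; rewrite -[T]mul1mx row_mul (Tsum (spec S)) //.
exact: submx_trans (row_sub _ _) eigenspaces_full.
Qed.

Lemma spec_neq_nil : (0 < n)%N -> spec S != [::].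
Proof.
move=> n_gt0; apply/eqP => spec0; pose i := Ordinal n_gt0.
have := sum_eigproj; rewrite spec0 big_nil => /matrixP /(_ i i).
by rewrite !mxE eqxx => /eqP; rewrite eq_sym oner_eq0.
Qed.

Lemma spectral_decomp : S = \sum_(l <- spec S) l *: eigproj S l.
Proof.
rewrite -{1}[S]mul1mx -sum_eigproj mulmx_suml.
by apply: eq_bigr => l _; exact: eigproj_mulmx.
Qed.

Lemma qform_spectral m v : m * sqnorm v - qform S v =
  \sum_(l <- spec S) (m - l) * qform (eigproj S l) v.
Proof.
rewrite -qform1 [in qform S v]spectral_decomp -sum_eigproj !qform_sum.
by rewrite mulr_sumr -sumrB; apply: eq_bigr => l _; rewrite qformZ mulrBl.
Qed.

Lemma qform_le_eig_max v : qform S v <= eig_max S * sqnorm v.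
Proof.
rewrite -subr_ge0 qform_spectral big_seq; apply: sumr_ge0 => l lS.
by rewrite mulr_ge0 ?subr_ge0 ?eig_max_ge ?qform_eigproj_ge0.
Qed.

Lemma eig_min_le_qform v : eig_min S * sqnorm v <= qform S v.
Proof.
rewrite -subr_ge0 -opprB qform_spectral -sumrN big_seq; apply: sumr_ge0 => l lS.
by rewrite -mulNr opprB mulr_ge0 ?subr_ge0 ?eig_min_le ?qform_eigproj_ge0.
Qed.

(* Equality forces every component of v off the top eigenspace to vanish. *)
Lemma qform_eq_eig_max v :
  qform S v = eig_max S * sqnorm v -> v *m S = eig_max S *: v.
Proof.
move=> vmax; have /eqP := subrr (qform S v); rewrite [X in X - _]vmax.
rewrite qform_spectral big_seq psumr_eq0 => [/allP vP0|l lS]; last first.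
  by rewrite mulr_ge0 ?subr_ge0 ?eig_max_ge ?qform_eigproj_ge0.
rewrite -[v in RHS]mulmx1 -sum_eigproj [in LHS]spectral_decomp.
rewrite !mulmx_sumr scaler_sumr.
apply: eq_big_seq => l lS; rewrite -!scalemxAr.
have := vP0 l lS; rewrite lS mulf_eq0 subr_eq0 => /orP [/eqP <- //|].
rewrite qform_orth_proj ?row_base_free // sqnorm_eq0 => /eqP ->.
by rewrite !scaler0.
Qed.

Lemma eig_min_ge m : (0 < n)%N ->
  (forall v, m * sqnorm v <= qform S v) -> m <= eig_min S.
Proof.
move=> n_gt0 mS; have := eig_min_mem (spec_neq_nil n_gt0).
rewrite mem_spec => /eigenvalueP [v vS v0].
by have := mS v; rewrite (qform_eigenvector vS) ler_pM2r ?sqnorm_gt0.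
Qed.

End SpectralDecomposition.

(* 1^T (I - x S)^-1 computed spectrally, with the terms at poles dropped. *)
Definition resolvent_ones (R : rcfType) n (S : 'M[R]_n) (x : R) : 'rV[R]_n :=
  \sum_(l <- spec S | 1 - l * x != 0)
    (1 - l * x)^-1 *: ((ones R n)^T *m eigproj S l).

Section Resolvent.
Variables (R : rcfType) (n : nat) (S : 'M[R]_n) (x : R).
Hypothesis symS : S^T = S.
Hypothesis poles_ortho_ones :
  forall l, l \in spec S -> 1 - l * x = 0 -> eigproj S l *m ones R n = 0.

Lemma ones_eigproj_pole l :
  l \in spec S -> 1 - l * x = 0 -> (ones R n)^T *m eigproj S l = 0.
Proof.
by move=> lS pole; rewrite -eigprojT -trmx_mul poles_ortho_ones ?trmx0.
Qed.

Lemma resolvent_onesP : resolvent_ones S x *m (1%:M - x *: S) = (ones R n)^T.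
Proof.
rewrite mulmx_suml -[RHS]mulmx1 -[in RHS](sum_eigproj symS) mulmx_sumr.
rewrite big_mkcond; apply: eq_big_seq => l lS /=.
case: ifPn => [nopole | /negPn /eqP pole]; last by rewrite ones_eigproj_pole.
rewrite -scalemxAl mulmxBr mulmx1 -scalemxAr -mulmxA eigproj_mulmx -scalemxAr.
set w := _ *m eigproj S l.
by rewrite scalerA -{1}[w]scale1r -scalerBl scalerA [x * l]mulrC mulVf // scale1r.
Qed.

Lemma walkgen_resolvent :
  walkgen S x = Some ((resolvent_ones S x *m ones R n) 0 0).
Proof.
have weight0 l : l \in spec S -> 1 - l * x = 0 -> eigweight S l = 0.
  by move=> lS pole; rewrite /eigweight ones_eigproj_pole // mul0mx mxE.
rewrite /walkgen; case: hasP => [[l] | _].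
  rewrite mem_filter => /andP [w0 lS] /eqP /(weight0 l lS) /eqP.
  by rewrite (negbTE w0).
congr Some; rewrite /resolvent_ones mulmx_suml summxE big_filter.
rewrite big_mkcond [RHS]big_mkcond /=; apply: eq_big_seq => l lS.
have [pole|_] := eqVneq (1 - l * x) 0.
  by rewrite weight0 // eqxx.
rewrite /= -scalemxAl mxE mulrC -/(eigweight S l).
by case: eqP => [->|]; rewrite ?mulr0.
Qed.

End Resolvent.

Section GraphSpectra.
Variables (R : rcfType) (n : nat) (e : rel 'I_n).
Hypotheses (symE : symmetric e) (irrE : irreflexive e).

Local Notation A := (adjm R e).
Local Notation D := (degm R e).
Local Notation L := (laplm R e).
Local Notation o := (ones R n).
Local Notation delta := (mindeg e)%:R.
Local Notation mu := (eig_max L).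

Lemma adjm_sym : A^T = A.
Proof. by apply/matrixP => i j; rewrite !mxE symE. Qed.

Lemma degm_sym : D^T = D.
Proof.
apply/matrixP => i j; rewrite !mxE eq_sym.
by case: eqP => [->|]; rewrite ?mul0r.
Qed.

Lemma laplm_sym : L^T = L.
Proof. by rewrite /laplm linearB /= adjm_sym degm_sym. Qed.

Lemma laplm_ones : L *m o = 0.
Proof.
apply/colP => i; rewrite /laplm mulmxBl !mxE (bigD1 i) //= big1 => [|j ji].
  apply/eqP; rewrite addr0 subr_eq0 !mxE eqxx mul1r mulr1; apply/eqP.
  rewrite /deg -sum1_card natr_sum big_mkcond; apply: eq_bigr => j _.
  by rewrite !mxE inE mulr1; case: (e i j).
by rewrite !mxE eq_sym (negbTE ji) !mul0r.
Qed.

Lemma ones_laplm : o^T *m L = 0.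
Proof. by rewrite -laplm_sym -trmx_mul laplm_ones trmx0. Qed.

Lemma mindeg_le_deg i : (mindeg e <= deg e i)%N.
Proof. by rewrite /mindeg -minEnat; exact: (bigmin_le _ i (deg e)). Qed.

Lemma qform_degm_ge v : delta * sqnorm v <= qform D v.
Proof.
rewrite /qform /sqnorm !mxE mulr_sumr; apply: ler_sum => i _.
rewrite !mxE (bigD1 i) //= big1 ?addr0 => [|j ji]; last first.
  by rewrite !mxE (negbTE ji) mul0r mulr0.
rewrite !mxE eqxx mul1r mulrAC [X in X <= _]mulrC.
rewrite ler_wpM2l ?ler_nat ?mindeg_le_deg //.
by rewrite -expr2 sqr_ge0.
Qed.

Lemma qform_adjm_ge v : (delta - mu) * sqnorm v <= qform A v.
Proof.
have := qform_le_eig_max laplm_sym v; have := qform_degm_ge v.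
rewrite /laplm qformB mulrBl; lra.
Qed.

Lemma eig_min_adjm_ge : (0 < n)%N -> delta - mu <= eig_min A.
Proof. by move=> n_gt0; apply: eig_min_ge adjm_sym _ n_gt0 qform_adjm_ge. Qed.

Section Edge.
Variables (i j : 'I_n).
Hypothesis eij : e i j.

Let w : 'rV[R]_n := delta_mx 0 i - delta_mx 0 j.

Let neq_ij : i != j.
Proof. by apply: contraTneq eij => ->; rewrite irrE. Qed.

Let sqnorm_w : sqnorm w = 2.
Proof.
rewrite -qform1 qform_delta_sub !mxE !eqxx [j == i]eq_sym (negbTE neq_ij) /=.
lra.
Qed.

Let qform_adjm_w : qform A w = -2.
Proof. by rewrite qform_delta_sub !mxE !irrE eij (symE j i) eij /=; lra. Qed.

Lemma eig_min_adjm_le : eig_min A <= -1.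
Proof.
by have := eig_min_le_qform adjm_sym w; rewrite sqnorm_w qform_adjm_w; lra.
Qed.

Lemma eig_max_laplm_ge : delta + 1 <= mu.
Proof.
have := qform_le_eig_max laplm_sym w.
rewrite /laplm qformB qform_adjm_w sqnorm_w qform_delta_sub !mxE !eqxx !mul1r.
have := mindeg_le_deg i; have := mindeg_le_deg j; rewrite -!(ler_nat R).
by rewrite [j == i]eq_sym (negbTE neq_ij) !mul0r; lra.
Qed.

End Edge.

(* A vector of the (delta - mu)-eigenspace of A attains the Rayleigh bound
   mu of L, so it is a mu-eigenvector of L, hence orthogonal to ker L. *)
Lemma eigenspace_adjm_ortho_ones : mu != 0 -> eigenspace A (delta - mu) *m o = 0.
Proof.
move=> mu0; apply/row_matrixP => k; rewrite row_mul row0.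
have /eigenspaceP bA := row_sub k (eigenspace A (delta - mu)).
set b := row k _ in bA *.
have bL : qform L b = mu * sqnorm b.
  apply/eqP; rewrite eq_le qform_le_eig_max ?laplm_sym //=.
  have := qform_degm_ge b; rewrite /laplm qformB (qform_eigenvector bA); lra.
have /eqP := congr1 (mulmx^~ o) (qform_eq_eig_max laplm_sym bL).
rewrite -mulmxA laplm_ones mulmx0 -scalemxAl eq_sym scaler_eq0 (negbTE mu0).
by move/eqP.
Qed.

Lemma adjm_poles_ortho_ones l : delta < mu -> l \in spec A ->
  1 - l * - (mu - delta)^-1 = 0 -> eigproj A l *m o = 0.
Proof.
move=> delta_mu _ pole; apply: eigproj_mul_eq0.
have -> : l = delta - mu.
  have t0 : mu - delta != 0 by rewrite subr_eq0 gt_eqF.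
  move: pole; rewrite mulrN opprK => /eqP; rewrite addrC addr_eq0 => /eqP.
  by move=> /(congr1 (fun y => y * (mu - delta))); rewrite divfK // => ->; ring.
rewrite eigenspace_adjm_ortho_ones // gt_eqF //.
by apply: le_lt_trans delta_mu; rewrite ler0n.
Qed.

(* Shifting u along 1 leaves its L-energy unchanged (L 1 = 0); the shift
   by t / mu, with t = mu - delta, optimizes the Rayleigh bound for L. *)
Lemma resolvent_ones_le (u : 'rV_n) : delta < mu ->
  u *m (1%:M - - (mu - delta)^-1 *: A) = o^T ->
  (u *m o) 0 0 <= n%:R * (1 - delta / mu).
Proof.
move=> delta_mu uRes; set t := mu - delta; set W := (u *m o) 0 0.
have t_gt0 : 0 < t by rewrite subr_gt0.
have mu_gt0 : 0 < mu by apply: le_lt_trans delta_mu; rewrite ler0n.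
have uA : u *m A = t *: (o^T - u).
  rewrite -uRes mulmxBr mulmx1 -scalemxAr scaleNr opprK addrC addKr.
  by rewrite scalerA mulfV ?gt_eqF // scale1r.
have qformA : qform A u = t * W - t * sqnorm u.
  have oW : (o^T *m u^T) 0 0 = W.
    by rewrite -[o^T *m u^T]trmxK trmx_mul !trmxK mxE.
  have entryB (X Y : 'M[R]_1) : (X - Y) 0 0 = X 0 0 - Y 0 0 by rewrite !mxE.
  by rewrite /qform uA -scalemxAl mulmxBl mxE entryB oW mulrBr.
have sqnorm_o : sqnorm o^T = n%:R.
  rewrite /sqnorm trmxK mxE (eq_bigr (fun=> 1)) => [|j _]; last first.
    by rewrite !mxE mulr1.
  by rewrite sumr_const card_ord.
have := qform_le_eig_max laplm_sym (u - (t / mu) *: o^T).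
rewrite -scaleNr qform_addZ_ker ?ones_laplm ?trmxK ?laplm_ones // scaleNr.
rewrite sqnorm_subZ trmxK -/W sqnorm_o /laplm qformB qformA.
have -> : mu * (sqnorm u - 2 * (t / mu) * W + (t / mu) ^+ 2 * n%:R) =
    mu * sqnorm u - 2 * t * W + t * (t / mu * n%:R) by field; rewrite gt_eqF.
have -> : n%:R * (1 - delta / mu) = t / mu * n%:R.
  by rewrite /t; field; rewrite gt_eqF.
set c := t / mu * n%:R => L_bound; rewrite -(ler_pM2l t_gt0).
have := qform_degm_ge u; have : t * sqnorm u = mu * sqnorm u - delta * sqnorm u.
  by rewrite mulrBl.
lra.
Qed.

End GraphSpectra.

Unset Implicit Arguments.
Set Strict Implicit.

Theorem proposition1 (R : rcfType) (n : nat) (e : rel 'I_n) :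
  simple_graph e -> has_edge e ->
  exists x : R, exists w : R,
    [/\ (eig_min (adjm R e))^-1 <= x, x <= 0,
        walkgen (adjm R e) x = Some w &
        w <= n%:R * (1 - (mindeg e)%:R / eig_max (laplm R e))].
Proof.
move=> [symE irrE] [i [j eij]].
have n_gt0 : (0 < n)%N := leq_ltn_trans (leq0n i) (ltn_ord i).
have delta_mu := eig_max_laplm_ge R symE irrE eij.
have lambda_le := eig_min_adjm_le R symE irrE eij.
have lambda_ge := eig_min_adjm_ge R symE n_gt0.
have t_gt0 : 0 < eig_max (laplm R e) - (mindeg e)%:R by lra.
pose x := - (eig_max (laplm R e) - (mindeg e)%:R)^-1.
have poles l : l \in spec (adjm R e) -> 1 - l * x = 0 ->
    eigproj (adjm R e) l *m ones R n = 0.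
  by apply: adjm_poles_ortho_ones symE _ _; lra.
exists x, ((resolvent_ones (adjm R e) x *m ones R n) 0 0); split.
- by rewrite -[eig_min _]opprK invrN lerN2 lef_pV2 ?posrE //; lra.
- by rewrite oppr_le0 invr_ge0 ltW.
- exact: walkgen_resolvent poles.
- apply: (resolvent_ones_le symE); first by lra.
  exact: resolvent_onesP (adjm_sym R symE) poles.
Qed.
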